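(* Fix integers $m\ge d\ge1$, $\lambda=d/m$, and $\sigma>0$. Let $p_1,p_2,\dots$ be monic polynomials of degree $d$, $p_i(x)=\prod_{j=1}^d(x-r_{i,j}^2)$ with $r_{i,j}$ real, such that $\frac1d\sum_jr_{i,j}^2=\sigma^2$ for all $i$. For $N\ge1$ let $P_N=p_1\boxplus_{d,\lambda}\cdots\boxplus_{d,\lambda}p_N$ and let $\widetilde P_N$ be the monic polynomial of degree $2d$ whose roots are the roots of $\mathbb{S}P_N$ multiplied by $1/\sqrt N$. Then, as $N\to\infty$, $\widetilde P_N$ converges coefficientwise to the monic polynomial whose roots are those of $x\mapsto L_d^{(m-d)}\!\big(\tfrac{m x^2}{\sigma^2}\big)$.
   Context: $(p\boxplus_{d,\lambda}q)(x)=\sum_{k=0}^dx^{d-k}(-1)^k\sum_{i+j=k}\frac{(d-i)!(d-j)!}{d!(d-k)!}\frac{(m-i)!(m-j)!}{m!(m-k)!}a_ib_j$ for $p=\sum(-1)^ia_ix^{d-i}$, $q=\sum(-1)^ib_ix^{d-i}$; associative, bilinear, preserves monic polynomials with nonnegative roots. $\mathbb{S}P(x)=P(x^2)$. Generalized Laguerre polynomial: $L_d^{(\alpha)}(x)=\sum_{i=0}^d\binom{d+\alpha}{d-i}\frac{(-x)^i}{i!}$. *)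

From HB Require Import structures.
From mathcomp Require Import all_boot all_order all_algebra.
From mathcomp Require Import all_classical all_reals all_analysis.
Set Implicit Arguments. Unset Strict Implicit. Unset Printing Implicit Defensive.
Import Order.TTheory GRing.Theory Num.Theory.
Local Open Scope ring_scope.

Section Defs.
Variable R : realType.

Definition ecoef (d : nat) (p : {poly R}) (i : nat) : R := (-1) ^+ i * p`_(d - i).

(* rectangular finite free convolution  p [+]_{d, d/m} q *)
Definition rconv (d m : nat) (p q : {poly R}) : {poly R} :=
  \sum_(k < d.+1)
    ((-1) ^+ k *
     \sum_(i < k.+1)
       (((d - i)`! * (d - (k - i))`!)%:R / ((d`! * (d - k)`!)%:R) *
        (((m - i)`! * (m - (k - i))`!)%:R / ((m`! * (m - k)`!)%:R)) *
        ecoef d p i * ecoef d q (k - i))) *: 'X^(d - k).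

Fixpoint convN (d m : nat) (p : nat -> {poly R}) (n : nat) : {poly R} :=
  match n with
  | 0 => p 0%N
  | n'.+1 => rconv d m (convN d m p n') (p n)
  end.

Definition Sop (P : {poly R}) : {poly R} := P \Po 'X^2.

(* monic-preserving dilation: roots of Q multiplied by c (c <> 0) *)
Definition dilate (c : R) (Q : {poly R}) : {poly R} :=
  c ^+ (size Q).-1 *: (Q \Po (c^-1 *: 'X)).

(* P~_N : roots of S P_N multiplied by 1/sqrt N, with P_N = p_1 [+] ... [+] p_N
   (here p_1, ..., p_N are p 0, ..., p (N-1)) *)
Definition Ptilde (d m : nat) (p : nat -> {poly R}) (N : nat) : {poly R} :=
  dilate (Num.sqrt (N%:R))^-1 (Sop (convN d m p N.-1)).

Definition laguerre (d alpha : nat) : {poly R} :=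
  \sum_(i < d.+1) ('C(d + alpha, d - i)%:R * (-1) ^+ i / (i`!)%:R) *: 'X^i.

Definition lag_target (d m : nat) (sigma : R) : {poly R} :=
  let Q := laguerre d (m - d) \Po ((m%:R / sigma ^+ 2) *: 'X^2) in
  (lead_coef Q)^-1 *: Q.

End Defs.

From Pilot Require Import Defs.
From HB Require Import structures.
From mathcomp Require Import all_boot all_order all_algebra.
From mathcomp Require Import all_classical all_reals all_analysis.
From mathcomp Require Import ring lra zify.
Set Implicit Arguments. Unset Strict Implicit. Unset Printing Implicit Defensive.
Import Order.TTheory GRing.Theory Num.Theory numFieldNormedType.Exports.
Local Open Scope classical_set_scope.
Local Open Scope ring_scope.

(* Weighting the coefficients as w_k a_k with w_k = (d-k)!(m-k)!/(d!m!) turns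
   the convolution [+]_{d,lambda} into multiplication of the truncated
   generating functions sum_k w_k a_k t^k.  Each p_i contributes
   1 + (sigma^2/m) t + O(t^2) with uniformly bounded coefficients, so the k-th
   weighted coefficient of P_N is (sigma^2 N/m)^k / k! + O(N^(k-1)), as for
   exp(sigma^2 N t/m).  Shrinking the roots of S P_N by sqrt N divides the
   coefficient of x^(2j) by N^(d-j), and the limits are the coefficients of
   the monic L_d^(m-d)(m x^2/sigma^2). *)

Section ElementaryBounds.
Variable R : realFieldType.

Lemma le_growth_of_increments (u : nat -> R) (A K0 : R) (j : nat) :
  0 <= A -> 0 <= K0 -> u 0%N <= A ->
  (forall n, u n.+1 <= u n + K0 * n.+1%:R ^+ j) ->
  forall n, u n <= (A + K0) * n.+1%:R ^+ j.+1.
Proof.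
move=> A_ge0 K0_ge0 u0 incr; elim=> [|n IH]; first by rewrite expr1n mulr1; lra.
apply: le_trans (incr n) _.
set N : R := n.+1%:R; have N_ge0 : 0 <= N by rewrite ler0n.
have -> : n.+2%:R = N + 1 :> R by rewrite /N natr1.
have le_pow : N ^+ j <= (N + 1) ^+ j by rewrite lerXn2r ?nnegrE //; lra.
have pow_ge0 : 0 <= N ^+ j by rewrite exprn_ge0.
move: IH; rewrite !exprS -/N => IH.
have : 0 <= (A + K0) * (N + 1) * ((N + 1) ^+ j - N ^+ j).
  by rewrite !mulr_ge0 //; lra.
nra.
Qed.

Lemma binomial_remainder_bound (k : nat) : exists2 c : R, 0 <= c &
  forall x : R, 1 <= x ->
  `|(x + 1) ^+ k.+2 - x ^+ k.+2 - k.+2%:R * x ^+ k.+1| <= c * x ^+ k.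
Proof.
elim: k => [|k [c c_ge0 IH]].
  exists 1 => // x _.
  have -> : (x + 1) ^+ 2 - x ^+ 2 - 2%:R * x ^+ 1 = 1 by rewrite -(natr1 1); ring.
  by rewrite normr1 expr0 mulr1.
exists (2 * c + k.+2%:R) => [|x x_ge1]; first by rewrite addr_ge0 ?mulr_ge0.
set e := (x + 1) ^+ k.+2 - x ^+ k.+2 - k.+2%:R * x ^+ k.+1.
have -> : (x + 1) ^+ k.+3 - x ^+ k.+3 - k.+3%:R * x ^+ k.+2 =
    (x + 1) * e + k.+2%:R * x ^+ k.+1 by rewrite /e -(natr1 k.+2) !exprS; ring.
have xk_ge0 : 0 <= x ^+ k by rewrite exprn_ge0 //; lra.
apply: le_trans (ler_normD _ _) _.
rewrite normrM (ger0_norm (_ : 0 <= x + 1)); last lra.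
rewrite [`|_ * x ^+ k.+1|]ger0_norm; last by rewrite mulr_ge0 ?exprn_ge0 //; lra.
have : (x + 1) * `|e| <= (2 * x) * (c * x ^+ k).
  by apply: ler_pM; rewrite ?normr_ge0 ?IH //; lra.
have : (2 * x) * (c * x ^+ k) + k.+2%:R * x ^+ k.+1 = (2 * c + k.+2%:R) * x ^+ k.+1.
  by rewrite exprS; ring.
lra.
Qed.

Definition exp_coef (s : R) (n i : nat) : R := s ^+ i * n.+1%:R ^+ i / i`!%:R.

Lemma norm_exp_coef_le (s : R) (K n i : nat) : (i <= K)%N ->
  `|exp_coef s n i| <= (1 + `|s|) ^+ K * n.+1%:R ^+ i.
Proof.
move=> le_iK; rewrite /exp_coef -mulrA normrM normrX.
have fact_pos : 0 < i`!%:R :> R by rewrite ltr0n fact_gt0.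
have s_ge0 := normr_ge0 s.
have Ni_ge0 : 0 <= n.+1%:R ^+ i :> R by rewrite exprn_ge0 ?ler0n.
rewrite [`|_ / _|]ger0_norm ?divr_ge0 ?ler0n //.
apply: ler_pM; rewrite ?exprn_ge0 ?divr_ge0 ?ler0n //.
- apply: le_trans (_ : _ <= (1 + `|s|) ^+ i) _.
    by apply: lerXn2r; rewrite ?nnegrE //; lra.
  by rewrite ler_weXn2l //; lra.
- by rewrite ler_pdivrMr // ler_peMr // ler1n fact_gt0.
Qed.

Lemma exp_coef_second_difference (s : R) (n k : nat) :
  let N : R := n.+1%:R in
  exp_coef s n.+1 k.+2 - exp_coef s n k.+2 - s * exp_coef s n k.+1 =
  s ^+ k.+2 / k.+2`!%:R * ((N + 1) ^+ k.+2 - N ^+ k.+2 - k.+2%:R * N ^+ k.+1).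
Proof.
move=> N; rewrite /exp_coef -(natr1 n.+1) -/N factS natrM exprS.
have fact_neq0 : k.+1`!%:R != 0 :> R by rewrite pnatr_eq0 -lt0n fact_gt0.
by field; rewrite fact_neq0 -natrD pnatr_eq0.
Qed.

End ElementaryBounds.

Section TruncatedProducts.
Variables (R : realFieldType) (G H : nat -> nat -> R) (s B : R) (K : nat).
Hypotheses (G_init : forall k, G 0%N k = H 0%N k)
  (H_0 : forall n, H n 0%N = 1) (H_1 : forall n, H n 1%N = s)
  (H_bounded : forall n j, (j <= K)%N -> `|H n j| <= B)
  (G_rec : forall n k, (k <= K)%N ->
     G n.+1 k = \sum_(i < k.+1) G n i * H n.+1 (k - i)%N).

Let G_0 n : G n 0%N = 1.
Proof.
elim: n => [|n IH]; first by rewrite G_init H_0.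
by rewrite G_rec // big_ord1 IH H_0 mulr1.
Qed.

Let G_1 n : (1 <= K)%N -> G n 1%N = s * n.+1%:R.
Proof.
move=> K_ge1; elim: n => [|n IH]; first by rewrite G_init H_1 mulr1.
rewrite G_rec // big_ord_recr big_ord1 /= G_0 H_1 IH subnn H_0.
by rewrite -(natr1 n.+1); ring.
Qed.

(* The error at index [i] is O(n^(i-1)); multiplying it by [n.+1] avoids [i - 1]
   at [i = 0]. *)
Definition exp_error_le (C : R) (k : nat) := forall i, (i <= k)%N -> forall n,
  `|G n i - exp_coef s n i| * n.+1%:R <= C * n.+1%:R ^+ i.

Lemma exp_error_le_ge0 C k : exp_error_le C k -> 0 <= C.
Proof.
move=> err; have := err 0%N (leq0n k) 0%N; rewrite expr0 mulr1.
by apply: le_trans; rewrite mulr_ge0 ?normr_ge0.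
Qed.

Lemma norm_G_le C k : (k <= K)%N -> exp_error_le C k ->
  forall i n, (i <= k)%N -> `|G n i| <= ((1 + `|s|) ^+ K + C) * n.+1%:R ^+ i.
Proof.
move=> le_kK err i n le_ik.
have N_ge1 : 1 <= n.+1%:R :> R by rewrite ler1n.
have : `|G n i - exp_coef s n i| <= C * n.+1%:R ^+ i.
  by apply: le_trans (err i le_ik n); rewrite ler_peMr ?normr_ge0.
have := norm_exp_coef_le s n (leq_trans le_ik le_kK).
have := ler_normD (G n i - exp_coef s n i) (exp_coef s n i).
by rewrite subrK mulrDl; lra.
Qed.

Let B_ge0 : 0 <= B.
Proof. exact: le_trans (normr_ge0 _) (H_bounded 0 (leq0n K)). Qed.

Lemma norm_lower_terms_le C k : (k.+2 <= K)%N -> exp_error_le C k.+1 ->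
  forall n, `|\sum_(i < k.+1) G n i * H n.+1 (k.+2 - i)%N| <=
            k.+1%:R * (((1 + `|s|) ^+ K + C) * B) * n.+1%:R ^+ k.
Proof.
move=> le_kK err n; set M := (1 + `|s|) ^+ K + C.
have N_ge1 : 1 <= n.+1%:R :> R by rewrite ler1n.
apply: le_trans (ler_norm_sum _ _ _) _.
apply: le_trans (_ : _ <= \sum_(i < k.+1) M * B * n.+1%:R ^+ k) _; last first.
  by rewrite sumr_const card_ord -[k.+1%:R * _ * _]mulrA mulr_natl.
apply: ler_sum => i _.
have le_ik : (i <= k.+1)%N by rewrite ltnW.
have le_ik' : (i <= k)%N by rewrite -ltnS.
rewrite normrM mulrAC ler_pM ?normr_ge0 ?H_bounded ?(leq_trans (leq_subr _ _)) //.
apply: le_trans (norm_G_le (ltnW le_kK) err n le_ik) _.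
rewrite ler_wpM2l ?ler_weXn2l //.
by rewrite addr_ge0 ?exprn_ge0 ?(exp_error_le_ge0 err) // ler_wpDr ?normr_ge0 ?ler01.
Qed.

Lemma exp_error_increment C k : (k.+2 <= K)%N -> exp_error_le C k.+1 ->
  exists2 K0 : R, 0 <= K0 & forall n,
    `|G n.+1 k.+2 - exp_coef s n.+1 k.+2| <=
    `|G n k.+2 - exp_coef s n k.+2| + K0 * n.+1%:R ^+ k.
Proof.
move=> le_kK err; have [c c_ge0 binom] := binomial_remainder_bound R k.
have C_ge0 := exp_error_le_ge0 err.
set M := (1 + `|s|) ^+ K + C; set a := `|s| ^+ k.+2 / k.+2`!%:R.
have a_ge0 : 0 <= a by rewrite divr_ge0 ?exprn_ge0 ?normr_ge0 ?ler0n.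
have M_ge0 : 0 <= M.
  by rewrite addr_ge0 ?exprn_ge0 // ler_wpDr ?normr_ge0 ?ler01.
exists (`|s| * C + k.+1%:R * (M * B) + a * c).
  apply: addr_ge0; last exact: mulr_ge0.
  by rewrite addr_ge0 ?mulr_ge0 ?normr_ge0 ?ler0n ?B_ge0.
move=> n; set N : R := n.+1%:R.
have N_gt0 : 0 < N by rewrite ltr0n.
have prev : `|G n k.+1 - exp_coef s n k.+1| <= C * N ^+ k.
  by rewrite -(ler_pM2r N_gt0) -mulrA -exprSr err.
have lower := norm_lower_terms_le le_kK err n.
have binomN : `|s ^+ k.+2 / k.+2`!%:R * ((N + 1) ^+ k.+2 - N ^+ k.+2 - k.+2%:R * N ^+ k.+1)|
    <= a * c * N ^+ k.
  rewrite normrM (normrM (s ^+ _)) normrX normfV (ger0_norm (ler0n _ _)) -/a -mulrA.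
  by rewrite ler_wpM2l ?binom // ler1n.
have rec : G n.+1 k.+2 = \sum_(i < k.+1) G n i * H n.+1 (k.+2 - i)%N
                        + s * G n k.+1 + G n k.+2.
  by rewrite G_rec // !big_ord_recr /= subnn subSnn H_0 H_1 mulr1 (mulrC (G n k.+1)).
set low := \sum_(i < k.+1) _ in rec lower.
have -> : G n.+1 k.+2 - exp_coef s n.+1 k.+2 =
    (G n k.+2 - exp_coef s n k.+2) + s * (G n k.+1 - exp_coef s n k.+1) + low
    - (exp_coef s n.+1 k.+2 - exp_coef s n k.+2 - s * exp_coef s n k.+1).
  by rewrite rec; ring.
rewrite exp_coef_second_difference -/N.
set e1 := G n k.+2 - _; set e2 := G n k.+1 - _; set E := s ^+ k.+2 / _ * _ in binomN *.
have := ler_normB (e1 + s * e2 + low) E.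
have := ler_normD (e1 + s * e2) low; have := ler_normD e1 (s * e2).
have : `|s * e2| <= `|s| * C * N ^+ k by rewrite normrM -mulrA ler_wpM2l ?normr_ge0.
rewrite -/M -/N in lower.
have -> : (`|s| * C + k.+1%:R * (M * B) + a * c) * N ^+ k =
    `|s| * C * N ^+ k + k.+1%:R * (M * B) * N ^+ k + a * c * N ^+ k by ring.
lra.
Qed.

Lemma exp_error_extend C k : (k.+1 <= K)%N -> exp_error_le C k ->
  exists C', exp_error_le C' k.+1.
Proof.
move=> le_kK err; have C_ge0 := exp_error_le_ge0 err.
suff [C1 C1_ge0 err1] : exists2 C1 : R, 0 <= C1 & forall n,
    `|G n k.+1 - exp_coef s n k.+1| * n.+1%:R <= C1 * n.+1%:R ^+ k.+1.
  exists (C + C1) => i; rewrite leq_eqVlt => /predU1P [-> n | lt_ik n].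
    by apply: le_trans (err1 n) _; rewrite ler_wpM2r ?exprn_ge0 ?ler0n //; lra.
  by apply: le_trans (err i lt_ik n) _; rewrite ler_wpM2r ?exprn_ge0 ?ler0n //; lra.
case: k le_kK err {C_ge0} => [|k] le_kK err.
  by exists 0 => // n; rewrite G_1 // /exp_coef !expr1 divr1 subrr normr0 !mul0r.
have [K0 K0_ge0 incr] := exp_error_increment le_kK err.
set u := fun n => `|G n k.+2 - exp_coef s n k.+2|.
exists (u 0%N + K0) => [|n]; first by rewrite addr_ge0 ?normr_ge0.
have := @le_growth_of_increments R u _ _ k (normr_ge0 _) K0_ge0 (lexx _) incr n.
by rewrite [in X in _ -> X]exprSr mulrA -(ler_pM2r (ltr0Sn _ n)).
Qed.

Lemma exp_error_bounded k : (k <= K)%N -> exists C, exp_error_le C k.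
Proof.
elim: k => [|k IH] le_kK.
  exists 0 => i; rewrite leqn0 => /eqP -> n.
  by rewrite G_0 /exp_coef !expr0 mulr1 divr1 subrr normr0 !mul0r.
have [C err] := IH (ltnW le_kK).
exact: exp_error_extend le_kK err.
Qed.

Theorem truncated_product_asymptotics k : (k <= K)%N -> exists C, forall n,
  `|G n k / n.+1%:R ^+ k - s ^+ k / k`!%:R| <= C / n.+1%:R.
Proof.
move=> le_kK; have [C err] := exp_error_bounded le_kK; exists C => n.
have N_gt0 : 0 < n.+1%:R :> R by rewrite ltr0n.
have Nk_gt0 : 0 < n.+1%:R ^+ k :> R by rewrite exprn_gt0.
have -> : G n k / n.+1%:R ^+ k - s ^+ k / k`!%:R =
    (G n k - exp_coef s n k) / n.+1%:R ^+ k.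
  by rewrite /exp_coef; field; rewrite gt_eqF // pnatr_eq0 -lt0n fact_gt0.
rewrite normrM normfV (ger0_norm (ltW Nk_gt0)) ler_pdivrMr // mulrAC ler_pdivlMr //.
exact: err.
Qed.

End TruncatedProducts.

Lemma natr_fact_neq0 (R : numDomainType) n : n`!%:R != 0 :> R.
Proof. by rewrite pnatr_eq0 -lt0n fact_gt0. Qed.

Lemma coef_comp_scaleX (R : comNzRingType) (Q : {poly R}) (a : R) i :
  (Q \Po (a *: 'X))`_i = a ^+ i * Q`_i.
Proof.
rewrite coef_comp_poly; under eq_bigr => j _ do rewrite exprZn coefZ coefXn.
have [lt_iQ | le_Qi] := ltnP i (size Q); last first.
  rewrite nth_default // mulr0 big1 // => j _.
  by rewrite (_ : i == j = false) ?mulr0 //; apply: contra_leqF le_Qi => /eqP ->.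
rewrite (bigD1 (Ordinal lt_iQ)) //= eqxx mulr1 mulrC big1 ?addr0 // => j.
by rewrite -val_eqE eq_sym => /negbTE /= ->; rewrite !mulr0.
Qed.

Section PolynomialCoefficients.
Variable R : realType.

Lemma coef_Sop (P : {poly R}) i : (Sop P)`_i = if odd i then 0 else P`_i./2.
Proof. by rewrite coef_comp_poly_Xn // dvdn2 -divn2; case: (odd i). Qed.

Lemma coef_comp_scaleX2 (Q : {poly R}) (a : R) i :
  (Q \Po (a *: 'X^2))`_i = if odd i then 0 else a ^+ i./2 * Q`_i./2.
Proof.
have -> : Q \Po (a *: 'X^2) = Sop (Q \Po (a *: 'X)).
  by rewrite /Sop -comp_polyA comp_polyZ comp_polyX.
by rewrite coef_Sop coef_comp_scaleX.
Qed.

Lemma coef_dilate (c : R) (Q : {poly R}) i :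
  (dilate c Q)`_i = c ^+ (size Q).-1 * c^-1 ^+ i * Q`_i.
Proof. by rewrite /dilate coefZ coef_comp_scaleX mulrA. Qed.

End PolynomialCoefficients.

Section WeightedCoefficients.
Variables (R : realType) (d m : nat).

Definition rconv_weight (k : nat) : R :=
  ((d - k)`! * (m - k)`!)%:R / (d`! * m`!)%:R.

Definition wcoef (p : {poly R}) (k : nat) : R := rconv_weight k * ecoef d p k.

Lemma rconv_weight0 : rconv_weight 0 = 1.
Proof. by rewrite /rconv_weight !subn0 divff // natrM mulf_neq0 ?natr_fact_neq0. Qed.

Lemma rconv_weight_neq0 k : rconv_weight k != 0.
Proof. by rewrite /rconv_weight !natrM mulf_neq0 ?invr_eq0 ?mulf_neq0 ?natr_fact_neq0. Qed.

Lemma rconv_weight_ge0 k : 0 <= rconv_weight k.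
Proof. by rewrite divr_ge0 ?ler0n. Qed.

Lemma rconv_weight_le1 k : rconv_weight k <= 1.
Proof.
rewrite ler_pdivrMr ?ltr0n ?muln_gt0 ?fact_gt0 // mul1r ler_nat.
by rewrite leq_mul // leq_fact // leq_subr.
Qed.

Lemma coef_sum_scaleXrev (F : 'I_d.+1 -> R) (k : 'I_d.+1) :
  (\sum_(j < d.+1) F j *: 'X^(d - j))`_(d - k) = F k.
Proof.
rewrite coef_sum (bigD1 k) //= coefZ coefXn eqxx mulr1 big1 ?addr0 // => j neq_jk.
rewrite coefZ coefXn (_ : (d - k == d - j)%N = false) ?mulr0 //.
by apply/negbTE; move: neq_jk (ltn_ord j) (ltn_ord k); rewrite -val_eqE /=; lia.
Qed.

Lemma size_sum_scaleXrev (F : 'I_d.+1 -> R) :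
  (size (\sum_(j < d.+1) F j *: 'X^(d - j))%R <= d.+1)%N.
Proof.
apply: (big_ind (fun q : {poly R} => size q <= d.+1)%N) => [|p q|j _].
- by rewrite size_poly0.
- by move=> sp sq; apply: leq_trans (size_polyD p q) _; rewrite geq_max sp.
- by apply: leq_trans (size_scale_leq _ _) _; rewrite size_polyXn ltnS leq_subr.
Qed.

Lemma wcoef_rconv (p q : {poly R}) k : (k <= d)%N ->
  wcoef (rconv d m p q) k = \sum_(i < k.+1) wcoef p i * wcoef q (k - i).
Proof.
move=> le_kd; pose k' := Ordinal (le_kd : (k < d.+1)%N).
rewrite /wcoef {1}/ecoef -[k in (d - k)%N]/(val k') coef_sum_scaleXrev /=.
rewrite signrMK mulr_sumr.
(* the weights absorb the factorials of [rconv]: w_k c_(k,i) = w_i w_(k-i) *)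
apply: eq_bigr => i _; rewrite /rconv_weight !natrM.
have := natr_fact_neq0 R; move: (ecoef d p i) (ecoef d q (k - i)) => x y nz.
by field; rewrite !nz.
Qed.

Lemma wcoef0 (p : {poly R}) : wcoef p 0 = p`_d.
Proof. by rewrite /wcoef rconv_weight0 /ecoef subn0 !mul1r. Qed.

Lemma coef_rconv_d (p q : {poly R}) : (rconv d m p q)`_d = p`_d * q`_d.
Proof. by rewrite -!wcoef0 wcoef_rconv // big_ord1. Qed.

Lemma size_rconv (p q : {poly R}) : (size (rconv d m p q) <= d.+1)%N.
Proof. exact: size_sum_scaleXrev. Qed.

End WeightedCoefficients.

Section ConvolutionPowers.
Variables (R : realType) (d m : nat) (p : nat -> {poly R}).
Hypotheses (size_p : forall i, size (p i) = d.+1) (lead_p : forall i, (p i)`_d = 1).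

Lemma coef_convN_d n : (Defs.convN d m p n)`_d = 1.
Proof. by elim: n => [|n IH] /=; rewrite ?coef_rconv_d ?IH lead_p ?mulr1. Qed.

Lemma size_convN n : size (Defs.convN d m p n) = d.+1.
Proof.
case: n => [|n]; first exact: size_p.
have /= lead := coef_convN_d n.+1.
apply/anti_leq; rewrite size_rconv ltnNge; apply/negP => /(nth_default 0).
by rewrite lead => /eqP; rewrite oner_eq0.
Qed.

Lemma coef_Ptilde n i : (Ptilde d m p n.+1)`_i =
  if odd i then 0 else (Defs.convN d m p n)`_i./2 / n.+1%:R ^+ (d - i./2).
Proof.
rewrite /Ptilde coef_dilate coef_Sop invrK size_comp_poly size_polyXn size_convN /=.
case: ifP => [_|i_even]; first by rewrite mulr0.
have [le_jd | lt_dj] := leqP i./2 d; last by rewrite nth_default ?size_convN ?mulr0 ?mul0r.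
set N : R := n.+1%:R; set t := Num.sqrt N.
have t_neq0 : t != 0 by rewrite sqrtr_eq0 -ltNge ltr0Sn.
have tt : t ^+ 2 = N by rewrite sqr_sqrtr // ler0n.
set j := i./2 in le_jd *.
have -> : i = (j * 2)%N by rewrite -{1}(odd_double_half i) i_even -muln2.
rewrite -[in (d * 2)%N](subnK le_jd) mulnDl exprD -!mulrA [t^-1 ^+ (j * 2)]exprVn.
rewrite mulKf ?expf_neq0 //.
by rewrite mulrC exprVn [((d - j) * 2)%N]mulnC exprM tt.
Qed.

Lemma coef_Ptilde_eq0 n i : odd i || (d < i./2)%N -> (Ptilde d m p n.+1)`_i = 0.
Proof.
rewrite coef_Ptilde; case: (odd i) => //= lt_dj.
by rewrite nth_default ?size_convN // mul0r.
Qed.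

Lemma coef_Ptilde_double n j : (j <= d)%N ->
  (Ptilde d m p n.+1)`_(j.*2) = (-1) ^+ (d - j) / rconv_weight R d m (d - j) *
    (wcoef d m (Defs.convN d m p n) (d - j) / n.+1%:R ^+ (d - j)).
Proof.
move=> le_jd; rewrite coef_Ptilde odd_double doubleK /= /wcoef /ecoef subKn //.
rewrite -mulrA (mulrA (rconv_weight R d m (d - j))^-1) mulKf ?rconv_weight_neq0 //.
by rewrite mulrA signrMK.
Qed.

End ConvolutionPowers.

Section LaguerreTarget.
Variables (R : realType) (d m : nat) (sigma : R).
Hypotheses (le_dm : (d <= m)%N) (m_gt0 : (0 < m)%N) (sigma_gt0 : 0 < sigma).

Lemma laguerre_poly alpha : laguerre R d alpha =
  \poly_(i < d.+1) ('C(d + alpha, d - i)%:R * (-1) ^+ i / i`!%:R).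
Proof. by rewrite poly_def. Qed.

Lemma coef_laguerre (alpha j : nat) : (laguerre R d alpha)`_j =
  if (j <= d)%N then 'C(d + alpha, d - j)%:R * (-1) ^+ j / j`!%:R else 0.
Proof. by rewrite laguerre_poly coef_poly ltnS. Qed.

Lemma size_laguerre alpha : size (laguerre R d alpha) = d.+1.
Proof.
rewrite laguerre_poly size_poly_eq // subnn bin0 mul1r.
by rewrite mulf_neq0 ?signr_eq0 ?invr_eq0 ?natr_fact_neq0.
Qed.

Lemma lead_coef_laguerre alpha : lead_coef (laguerre R d alpha) = (-1) ^+ d / d`!%:R.
Proof. by rewrite lead_coefE size_laguerre coef_laguerre leqnn subnn bin0 mul1r. Qed.

Let a := m%:R / sigma ^+ 2.

Let a_neq0 : a != 0.
Proof. by rewrite mulf_neq0 ?invr_eq0 ?expf_neq0 ?gt_eqF ?ltr0n. Qed.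

Lemma coef_lag_target i : (lag_target d m sigma)`_i = if odd i then 0 else
  (laguerre R d (m - d))`_i./2 / (lead_coef (laguerre R d (m - d)) * a ^+ (d - i./2)).
Proof.
rewrite /lag_target coefZ coef_comp_scaleX2 lead_coef_comp; last first.
  by rewrite size_scale ?size_polyXn.
rewrite lead_coefZ lead_coefXn mulr1 size_laguerre /=.
case: ifP => _; first by rewrite mulr0.
have [le_jd | lt_dj] := leqP i./2 d; last first.
  by rewrite coef_laguerre leqNgt lt_dj /= !mulr0 mul0r.
have L_neq0 : lead_coef (laguerre R d (m - d)) != 0.
  by rewrite lead_coef_laguerre mulf_neq0 ?signr_eq0 ?invr_eq0 ?natr_fact_neq0.
rewrite -[in a ^+ d](subnK le_jd) exprD.
by field; rewrite L_neq0 !expf_neq0.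
Qed.

Lemma coef_lag_target_eq0 i : odd i || (d < i./2)%N -> (lag_target d m sigma)`_i = 0.
Proof.
rewrite coef_lag_target coef_laguerre; case: (odd i) => //= lt_dj.
by rewrite leqNgt lt_dj mul0r.
Qed.

Lemma coef_lag_target_double j : (j <= d)%N ->
  (lag_target d m sigma)`_(j.*2) = (-1) ^+ (d - j) / rconv_weight R d m (d - j) *
                                   ((sigma ^+ 2 / m%:R) ^+ (d - j) / (d - j)`!%:R).
Proof.
move=> le_jd; rewrite coef_lag_target odd_double doubleK /= coef_laguerre le_jd.
rewrite lead_coef_laguerre subnKC // /rconv_weight -[sigma ^+ 2 / _]invf_div -/a exprVn.
set k := (d - j)%N; have -> : (d - k = j)%N by rewrite subKn.
move: (a ^+ k) (expf_neq0 k a_neq0) => b b_neq0.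
have le_km : (k <= m)%N by rewrite (leq_trans (leq_subr _ _)).
have -> : (-1) ^+ d = (-1) ^+ j * (-1) ^+ k :> R by rewrite -exprD subnKC.
have -> : 'C(m, k)%:R = m`!%:R / (k`!%:R * (m - k)`!%:R) :> R.
  by rewrite -(bin_fact le_km) !natrM mulfK // mulf_neq0 ?natr_fact_neq0.
(* [field] cannot use ((-1)^k)^2 = 1 by itself *)
rewrite -[LHS]mulr1 -{1}(@sqrr_sign R k) !natrM.
have := natr_fact_neq0 R => fact_neq0.
by field; rewrite !fact_neq0 b_neq0 !signr_eq0.
Qed.

End LaguerreTarget.

Lemma norm_coef_prod_XsubC_le (R : numDomainType) (rs : seq R) (b : R) :
  (forall y, y \in rs -> `|y| <= b) ->
  forall k, `|(\prod_(y <- rs) ('X - y%:P))`_k| <= (1 + b) ^+ size rs.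
Proof.
elim: rs => [|y rs IH] le_b k.
  by rewrite big_nil coef1; case: (k == 0%N); rewrite ?normr1 ?normr0 ?ler01.
have le_yb : `|y| <= b by rewrite le_b ?mem_head.
have {}IH := IH (fun z z_rs => le_b z (mem_behead (s := y :: rs) z_rs)).
have pow_ge0 : 0 <= (1 + b) ^+ size rs.
  by rewrite exprn_ge0 // addr_ge0 // (le_trans (normr_ge0 y)).
rewrite big_cons mulrBl coefB coefXM coefCM /= exprS mulrDl mul1r.
apply: le_trans (ler_normB _ _) (lerD _ _).
  by case: (k == 0%N); rewrite ?normr0 ?IH.
by rewrite normrM ler_pM ?normr_ge0.
Qed.

Section RootPolynomials.
Variables (R : realType) (d m : nat) (x : 'I_d -> R).
Let P := \prod_(j < d) ('X - (x j)%:P).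

Let P_seq : P = \prod_(y <- [seq x j | j <- index_enum 'I_d]) ('X - y%:P).
Proof. by rewrite big_map. Qed.

Let size_index_enum : size [seq x j | j <- index_enum 'I_d] = d.
Proof. by rewrite size_map [index_enum _]unlock -enumT size_enum_ord. Qed.

Lemma size_prod_XsubC_ord : size P = d.+1.
Proof. by rewrite P_seq size_prod_XsubC size_index_enum. Qed.

Lemma coef_prod_XsubC_ord_d : P`_d = 1.
Proof.
have /monicP := monic_prod_XsubC (index_enum 'I_d) xpredT x.
by rewrite lead_coefE size_prod_XsubC_ord.
Qed.

Lemma wcoef_prod_XsubC1 : (0 < d)%N -> (0 < m)%N ->
  wcoef d m P 1 = (d%:R)^-1 * (\sum_(j < d) x j) / m%:R.
Proof.
move=> d_gt0 m_gt0; rewrite /wcoef /ecoef /rconv_weight !subn1.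
have := coefPn_prod_XsubC (_ : size [seq x j | j <- index_enum 'I_d] != 0%N).
rewrite size_index_enum -P_seq big_map => ->; last by rewrite -lt0n.
have fact_pred n : (0 < n)%N -> n`!%:R = n%:R * n.-1`!%:R :> R.
  by case: n => // n _; rewrite -natrM factS.
rewrite !natrM (fact_pred d) // (fact_pred m) //.
have := natr_fact_neq0 R => fact_neq0.
by field; rewrite !fact_neq0 !pnatr_eq0 -!lt0n d_gt0 m_gt0.
Qed.

Lemma norm_wcoef_prod_XsubC_le : (forall j, 0 <= x j) ->
  forall k, `|wcoef d m P k| <= (1 + \sum_(j < d) x j) ^+ d.
Proof.
move=> x_ge0 k; rewrite /wcoef /ecoef mulrA normrM -[X in _ <= X]mul1r.
rewrite ler_pM ?normr_ge0 //.
  by rewrite normrM normrX normrN1 expr1n mulr1 ger0_norm ?rconv_weight_ge0 ?rconv_weight_le1.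
have := @norm_coef_prod_XsubC_le R [seq x j | j <- index_enum 'I_d] (\sum_(j < d) x j).
rewrite size_index_enum -P_seq; apply => _ /mapP [j _ ->].
by rewrite ger0_norm // (bigD1 j) //= lerDl sumr_ge0.
Qed.

End RootPolynomials.

Lemma cvg_harmonic_bound (R : realType) (u : nat -> R) (l C : R) :
  (forall n, `|u n - l| <= C / n.+1%:R) -> u @ \oo --> l.
Proof.
move=> bound.
have lim_pm (e : R) : (fun n => l + e * harmonic n) @ \oo --> l.
  apply: cvg_trans (cvgD (cvg_cst l) (cvgMl_tmp (a := e) (@cvg_harmonic R))) _.
  by rewrite mulr0 addr0.
apply: (squeeze_cvgr _ (lim_pm (- C)) (lim_pm C)); near=> n.
by have := bound n; rewrite ler_distl /= mulNr.
Unshelve. all: by end_near.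
Qed.

Section SquaredRootPolynomials.
Variables (R : realType) (d m : nat) (sigma : R).
Variables (p : nat -> {poly R}) (r : nat -> 'I_d -> R).
Hypotheses (d_gt0 : (0 < d)%N) (m_gt0 : (0 < m)%N).
Hypothesis p_def : forall i, p i = \prod_(j < d) ('X - (r i j ^+ 2)%:P).
Hypothesis mean_r : forall i, (d%:R)^-1 * \sum_(j < d) r i j ^+ 2 = sigma ^+ 2.

Lemma wcoef_convN_asymptotics k : (k <= d)%N -> exists C, forall n,
  `|wcoef d m (Defs.convN d m p n) k / n.+1%:R ^+ k - (sigma ^+ 2 / m%:R) ^+ k / k`!%:R|
    <= C / n.+1%:R.
Proof.
move=> le_kd.
apply: (@truncated_product_asymptotics R (fun n => wcoef d m (Defs.convN d m p n))
  (fun n => wcoef d m (p n)) _ ((1 + d%:R * sigma ^+ 2) ^+ d) d) => // [n|n|n j _|n j le_jd].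
- by rewrite wcoef0 p_def coef_prod_XsubC_ord_d.
- by rewrite p_def wcoef_prod_XsubC1 // mean_r.
- have <- : \sum_(j < d) r n j ^+ 2 = d%:R * sigma ^+ 2.
    by rewrite -(mean_r n) mulVKf // pnatr_eq0 -lt0n.
  by rewrite p_def norm_wcoef_prod_XsubC_le // => j'; exact: sqr_ge0.
- exact: wcoef_rconv.
Qed.

End SquaredRootPolynomials.

Theorem mainTheorem8 (R : realType) (d m : nat) (sigma : R)
    (p : nat -> {poly R}) (r : nat -> 'I_d -> R) :
  (1 <= d)%N -> (d <= m)%N -> 0 < sigma ->
  (forall i, p i = \prod_(j < d) ('X - ((r i j) ^+ 2)%:P)) ->
  (forall i, (d%:R)^-1 * \sum_(j < d) (r i j) ^+ 2 = sigma ^+ 2) ->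
  forall k : nat,
    (fun N : nat => (Ptilde d m p N.+1)`_k) @ \oo --> (lag_target d m sigma)`_k.
Proof.
move=> d_gt0 le_dm sigma_gt0 p_def mean_r k.
have m_gt0 := leq_trans d_gt0 le_dm.
have size_p i : size (p i) = d.+1 by rewrite p_def size_prod_XsubC_ord.
have lead_p i : (p i)`_d = 1 by rewrite p_def coef_prod_XsubC_ord_d.
have [vanish | ] := boolP (odd k || (d < k./2)%N).
  rewrite coef_lag_target_eq0 //.
  under eq_fun do rewrite coef_Ptilde_eq0 //.
  exact: cvg_cst.
rewrite negb_or -leqNgt => /andP [k_even le_jd].
rewrite -(odd_double_half k) (negbTE k_even) add0n coef_lag_target_double //.
under eq_fun do rewrite coef_Ptilde_double //.
have [C rate] := wcoef_convN_asymptotics d_gt0 m_gt0 p_def mean_r (leq_subr k./2 d).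
by apply: cvgMl_tmp; exact: cvg_harmonic_bound rate.
Qed.
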